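(* Let $K$ be a field, $\boldsymbol{\lambda}=(\lambda_1,\dots,\lambda_n)$ a vector of positive integers, and $\Lambda=\langle 1/\lambda_1,\dots,1/\lambda_n\rangle$ the additive submonoid of $\mathbb{Q}_{\ge}$ generated by $1/\lambda_1,\dots,1/\lambda_n$. If $I(\boldsymbol{\lambda})\subseteq K[x_1,\dots,x_n]$ is normal, then $\Lambda$ is quasinormal.
   Context: $I(\boldsymbol{\lambda})$ is the integral closure in $K[x_1,\dots,x_n]$ of $(x_1^{\lambda_1},\dots,x_n^{\lambda_n})$; an ideal is normal if all its positive powers are integrally closed. A submonoid $S$ of the nonnegative rationals $\mathbb{Q}_{\ge}$ is quasinormal if whenever $x\in S$ and $x\ge p$ for a positive integer $p$, there exist $y_1,\dots,y_p\in S$ with $y_i\ge1$ for all $i$ and $x=y_1+\cdots+y_p$. *)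

From mathcomp Require Import all_boot all_order all_algebra.
From mathcomp Require Import mpoly.
Set Implicit Arguments. Unset Strict Implicit. Unset Printing Implicit Defensive.
Import Order.TTheory GRing.Theory Num.Theory.
Local Open Scope ring_scope.

Section IdealDefs.
Variables (R : comNzRingType).

Definition subsetR := R -> Prop.

Definition ideal_gen (S : subsetR) : subsetR :=
  fun f => exists s : seq (R * R),
      (forall c, c \in s -> S c.2) /\ f = \sum_(c <- s) c.1 * c.2.

Definition ideal_mul (I J : subsetR) : subsetR :=
  ideal_gen (fun f => exists a b, I a /\ J b /\ f = a * b).

Fixpoint ideal_pow (I : subsetR) (k : nat) : subsetR :=
  match k with
  | 0 => ideal_gen (fun f => f = 1)
  | k'.+1 => ideal_mul (ideal_pow I k') I
  end.

Definition integral_over_ideal (I : subsetR) (f : R) : Prop :=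
  exists (m : nat) (a : nat -> R), (0 < m)%N /\
    (forall i, (1 <= i <= m)%N -> ideal_pow I i (a i)) /\
    f ^+ m + \sum_(1 <= i < m.+1) a i * f ^+ (m - i) = 0.

Definition integral_closure (I : subsetR) : subsetR := integral_over_ideal I.

Definition integrally_closed (I : subsetR) : Prop :=
  forall f, integral_closure I f -> I f.

Definition normal_ideal (I : subsetR) : Prop :=
  forall k : nat, (0 < k)%N -> integrally_closed (ideal_pow I k).

End IdealDefs.

Definition I_lambda (K : fieldType) (n : nat) (lam : 'I_n -> nat) : subsetR {mpoly K[n]} :=
  integral_closure (ideal_gen (fun f : {mpoly K[n]} => exists i : 'I_n, f = 'X_i ^+ lam i)).

Arguments I_lambda K {n} lam.

Definition Lambda_mon (n : nat) (lam : 'I_n -> nat) : rat -> Prop :=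
  fun x => exists c : 'I_n -> nat, x = \sum_(i < n) (c i)%:R / (lam i)%:R.

Definition quasinormal (S : rat -> Prop) : Prop :=
  forall (x : rat) (p : nat), S x -> (0 < p)%N -> (p%:R <= x) ->
    exists y : 'I_p -> rat,
      (forall i, S (y i) /\ 1 <= y i) /\ x = \sum_(i < p) y i.

(* Give the variable x_i the weight 1/lam_i, so that x^e has weight
   Σ e_i/lam_i ∈ Λ (in ℕ we use the weights M/lam_i with M = Π lam_i).  The
   generators x_i^lam_i have weight 1, and integral closure cannot lower the
   least weight d of a support monomial: if d were below a bound m valid on I,
   then in f^k + Σ a_i f^(k-i) = 0 the weight-kd part of f^k, a power of the
   lowest part of f, is nonzero, while a_i f^(k-i) only has weights
   >= im + (k-i)d > kd.  Hence every support monomial of an element of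
   I(lam)^p has weight z + y_1 + ... + y_p with z, y_j ∈ Λ and y_j >= 1.
   Conversely, if x = Σ c_i/lam_i >= p then
   (x^c)^M = Π (x_i^lam_i)^(c_i M/lam_i) lies in I(lam)^(pM) ⊆ (I(lam)^p)^M,
   so x^c is integral over I(lam)^p; normality puts x^c in I(lam)^p, and
   absorbing z into y_1 writes x as a sum of p elements of Λ that are >= 1. *)

From mathcomp Require Import all_boot all_order all_algebra.
From mathcomp Require Import mpoly.
From mathcomp Require Import zify ring lra.
Set Implicit Arguments. Unset Strict Implicit. Unset Printing Implicit Defensive.
Import Order.TTheory GRing.Theory Num.Theory.
Local Open Scope ring_scope.

Section IdealPowers.
Variable R : comNzRingType.
Implicit Types (S T I J : subsetR R) (f g : R).

Lemma ideal_gen_subset S f : S f -> ideal_gen S f.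
Proof.
move=> Sf; exists [:: (1, f)]; split; last by rewrite big_seq1 mul1r.
by move=> c; rewrite inE => /eqP ->.
Qed.

Lemma ideal_gen0 S : ideal_gen S 0.
Proof. by exists [::]; split => //; rewrite big_nil. Qed.

Lemma ideal_genD S f g : ideal_gen S f -> ideal_gen S g -> ideal_gen S (f + g).
Proof.
move=> [s1 [h1 ->]] [s2 [h2 ->]]; exists (s1 ++ s2); split; last by rewrite big_cat.
by move=> c; rewrite mem_cat => /orP [/h1|/h2].
Qed.

Lemma ideal_genMl S r f : ideal_gen S f -> ideal_gen S (r * f).
Proof.
move=> [s [h ->]]; exists (map (fun c => (r * c.1, c.2)) s); split.
  by move=> c /mapP [c' /h ? ->].
by rewrite big_map mulr_sumr; apply: eq_bigr => c _; rewrite mulrA.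
Qed.

Lemma ideal_gen_min S J :
  J 0 -> (forall f g, J f -> J g -> J (f + g)) -> (forall r f, J f -> J (r * f)) ->
  (forall g, S g -> J g) -> forall f, ideal_gen S f -> J f.
Proof.
move=> J0 JD JM SJ _ [s [hs ->]]; rewrite big_seq.
by apply: big_ind => // c /hs /SJ; apply: JM.
Qed.

Lemma ideal_gen_trans S T f :
  (forall g, S g -> ideal_gen T g) -> ideal_gen S f -> ideal_gen T f.
Proof.
move=> hST; apply: (ideal_gen_min (J := ideal_gen T)) hST f.
- exact: ideal_gen0.
- exact: ideal_genD.
- exact: ideal_genMl.
Qed.

Lemma ideal_mul_mulr I J J' f y : (forall b, J b -> J' (b * y)) ->
  ideal_mul I J f -> ideal_mul I J' (f * y).
Proof.
move=> hJ; apply: ideal_gen_min (fun f => ideal_mul I J' (f * y)) _ _ _ _ f.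
- by rewrite mul0r; apply: ideal_gen0.
- by move=> f g hf hg; rewrite mulrDl; apply: ideal_genD.
- by move=> r f hf; rewrite -mulrA; apply: ideal_genMl.
move=> _ [a [b [ha [hb ->]]]]; rewrite -mulrA; apply: ideal_gen_subset.
by exists a, (b * y); split => //; split => //; apply: hJ.
Qed.

Lemma ideal_pow_zero I k : ideal_pow I k 0.
Proof. by case: k => [|k]; apply: ideal_gen0. Qed.

Lemma ideal_powD I k f g : ideal_pow I k f -> ideal_pow I k g -> ideal_pow I k (f + g).
Proof. by case: k => [|k]; apply: ideal_genD. Qed.

Lemma ideal_powMl I k r f : ideal_pow I k f -> ideal_pow I k (r * f).
Proof. by case: k => [|k]; apply: ideal_genMl. Qed.

Lemma ideal_powN I k f : ideal_pow I k f -> ideal_pow I k (- f).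
Proof. by rewrite -mulN1r; apply: ideal_powMl. Qed.

Lemma ideal_pow0_one I : ideal_pow I 0 1.
Proof. exact: ideal_gen_subset. Qed.

Lemma ideal_powS_mul I k a b : ideal_pow I k a -> I b -> ideal_pow I k.+1 (a * b).
Proof. by move=> ha hb; apply: ideal_gen_subset; exists a, b. Qed.

Lemma ideal_powS_sub I k f : ideal_pow I k.+1 f -> ideal_pow I k f.
Proof.
elim: k f => [|k IH] f; apply: ideal_gen_trans => _ [a [b [ha [hb ->]]]].
  by rewrite mulrC; apply: ideal_genMl.
by apply: ideal_gen_subset; exists a, b; split; [apply: IH|].
Qed.

Lemma ideal_pow_leq I k l f : (k <= l)%N -> ideal_pow I l f -> ideal_pow I k f.
Proof.
move=> /subnK <-; elim: (l - k)%N f => [//|j IH] f hf.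
by apply: IH; apply: ideal_powS_sub; rewrite -addSn.
Qed.

Lemma ideal_pow_mul_gen I m a S b : (forall g, S g -> ideal_pow I m (a * g)) ->
  ideal_gen S b -> ideal_pow I m (a * b).
Proof.
move=> hS; apply: (ideal_gen_min (J := fun b => ideal_pow I m (a * b))) hS b.
- by rewrite mulr0; apply: ideal_pow_zero.
- by move=> f g hf hg; rewrite mulrDr; apply: ideal_powD.
- by move=> r f hf; rewrite mulrCA; apply: ideal_powMl.
Qed.

Lemma ideal_powM I k l a b :
  ideal_pow I k a -> ideal_pow I l b -> ideal_pow I (k + l) (a * b).
Proof.
move=> ha; elim: l b => [|l IH] b; rewrite ?addn0 ?addnS; apply: ideal_pow_mul_gen.
  by move=> _ ->; rewrite mulr1.
by move=> _ [x [y [hx [hy ->]]]]; rewrite mulrA; apply: ideal_powS_mul (IH _ hx) hy.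
Qed.

Lemma ideal_pow_exp I k g : I g -> ideal_pow I k (g ^+ k).
Proof.
move=> hg; elim: k => [|k IH]; first exact: ideal_pow0_one.
by rewrite exprSr; apply: ideal_powS_mul.
Qed.

Lemma ideal_pow_prod I (A : Type) (s : seq A) (F : A -> R) (k : A -> nat) :
  (forall j, ideal_pow I (k j) (F j)) ->
  ideal_pow I (\sum_(j <- s) k j)%N (\prod_(j <- s) F j).
Proof.
move=> hF; elim: s => [|j s IH]; first by rewrite !big_nil; apply: ideal_pow0_one.
by rewrite !big_cons; apply: ideal_powM.
Qed.

Lemma ideal_pow_addn_sub I a b f :
  ideal_pow I (a + b) f -> ideal_mul (ideal_pow I a) (ideal_pow I b) f.
Proof.
elim: b f => [|b IH] f; rewrite ?addn0 ?addnS.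
  move=> hf; apply: ideal_gen_subset; exists f, 1.
  by rewrite mulr1; split => //; split => //; apply: ideal_pow0_one.
apply: ideal_gen_trans => _ [x [y [hx [hy ->]]]].
by apply: ideal_mul_mulr (IH _ hx) => v hv; apply: ideal_powS_mul.
Qed.

Lemma ideal_pow_mulnr_sub I p m f :
  ideal_pow I (p * m) f -> ideal_pow (ideal_pow I p) m f.
Proof.
elim: m f => [|m IH] f; first by rewrite muln0.
rewrite mulnS addnC => /ideal_pow_addn_sub; apply: ideal_gen_trans.
move=> _ [x [y [hx [hy ->]]]]; apply: ideal_gen_subset.
by exists x, y; split; [apply: IH|].
Qed.

Lemma integral_of_exp I m f :
  (0 < m)%N -> ideal_pow I m (f ^+ m) -> integral_closure I f.
Proof.
move=> m_gt0 hfm; exists m, (fun i => if i == m then - f ^+ m else 0).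
split=> //; split.
  by move=> i _; case: eqP => [->|_]; [apply: ideal_powN | apply: ideal_pow_zero].
rewrite big_nat_recr //= big_nat big1 => [|i /andP [_ /ltn_eqF ->]];
  last by rewrite mul0r.
by rewrite eqxx subnn expr0 mulr1 add0r subrr.
Qed.

Lemma integral_closure_subset I f : I f -> integral_closure I f.
Proof.
move=> hf; apply: (@integral_of_exp _ 1) => //.
by rewrite expr1 -[f]mul1r; apply: ideal_powS_mul (ideal_pow0_one I) hf.
Qed.

End IdealPowers.

Section SupportConditions.
Variables (R : idomainType) (n : nat).
Implicit Types (f g h : {mpoly R[n]}) (P Q : 'X_{1..n} -> Prop).

Definition msupp_in P f := forall e, e \in msupp f -> P e.

Lemma msupp_in0 P : msupp_in P 0.
Proof. by move=> e; rewrite msupp0. Qed.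

Lemma msupp_inD P f g : msupp_in P f -> msupp_in P g -> msupp_in P (f + g).
Proof. by move=> hf hg e /msuppD_le; rewrite mem_cat => /orP [/hf|/hg]. Qed.

Lemma msupp_inN P f : msupp_in P f -> msupp_in P (- f).
Proof. by move=> hf e; rewrite (perm_mem (msuppN f)) => /hf. Qed.

Lemma msupp_in_sum P (I : Type) (s : seq I) (C : pred I) (F : I -> {mpoly R[n]}) :
  (forall i, C i -> msupp_in P (F i)) -> msupp_in P (\sum_(i <- s | C i) F i).
Proof. by apply: big_ind; [apply: msupp_in0 | apply: msupp_inD]. Qed.

Lemma msupp_inM P Q f g : msupp_in P f -> msupp_in Q g ->
  msupp_in (fun e => exists e1 e2, [/\ P e1, Q e2 & e = (e1 + e2)%MM]) (f * g).
Proof.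
move=> hf hg e /msuppM_le /allpairsP [[e1 e2] /= [h1 h2 ->]].
by exists e1, e2; split; [apply: hf | apply: hg |].
Qed.

Lemma msupp_in_sub P Q f : (forall e, P e -> Q e) -> msupp_in P f -> msupp_in Q f.
Proof. by move=> PQ hf e /hf /PQ. Qed.

Lemma msupp_inZX P c e : P e -> msupp_in P (c *: 'X_[e]).
Proof. by move=> Pe e' /msuppZ_le; rewrite msuppX mem_seq1 => /eqP ->. Qed.

Lemma msupp_in_gen P S f : (forall e e', P e -> P (e + e')%MM) ->
  (forall g, S g -> msupp_in P g) -> ideal_gen S f -> msupp_in P f.
Proof.
move=> P_up hS; apply: (ideal_gen_min (J := msupp_in P)) hS f.
- exact: msupp_in0.
- exact: msupp_inD.
move=> r f hf; apply: msupp_in_sub (msupp_inM (fun _ _ => I) hf).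
by move=> _ [e1 [e2 [_ Pe2 ->]]]; rewrite addmC; apply: P_up.
Qed.

Variable w : 'I_n -> nat.

Definition wdeg (e : 'X_{1..n}) : nat := \sum_(i < n) e i * w i.

Lemma wdegD e1 e2 : wdeg (e1 + e2)%MM = (wdeg e1 + wdeg e2)%N.
Proof. by rewrite /wdeg -big_split; apply: eq_bigr => i _; rewrite mnmDE mulnDl. Qed.

Lemma wdegMn e k : wdeg (e *+ k)%MM = (k * wdeg e)%N.
Proof. by rewrite /wdeg big_distrr; apply: eq_bigr => i _ /=; rewrite mulmnE; lia. Qed.

Lemma wdegU i : wdeg U_(i)%MM = w i.
Proof.
rewrite /wdeg (bigD1 i) //= mnm1E eqxx mul1n big1 ?addn0 // => j /negbTE.
by rewrite mnm1E eq_sym => ->.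
Qed.

Definition worder_ge m f := msupp_in (fun e => m <= wdeg e)%N f.

Lemma worder_ge_le m m' f : (m' <= m)%N -> worder_ge m f -> worder_ge m' f.
Proof. by move=> le_m; apply: msupp_in_sub => e; apply: leq_trans. Qed.

Lemma worder_geM a b f g :
  worder_ge a f -> worder_ge b g -> worder_ge (a + b) (f * g).
Proof.
move=> hf hg; apply: msupp_in_sub (msupp_inM hf hg) => _ [e1 [e2 [h1 h2 ->]]].
by rewrite wdegD leq_add.
Qed.

Lemma worder_ge_exp m k f : worder_ge m f -> worder_ge (k * m) (f ^+ k).
Proof.
move=> hf; elim: k => [|k IH]; first by move=> e _; rewrite mul0n.
by rewrite exprSr mulSnr; apply: worder_geM.
Qed.

Lemma worder_ge_gen m S f :
  (forall g, S g -> worder_ge m g) -> ideal_gen S f -> worder_ge m f.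
Proof.
by apply: msupp_in_gen => e e' le_m; rewrite wdegD (leq_trans le_m (leq_addr _ _)).
Qed.

Lemma worder_ge_pow m I k f : (forall g, I g -> worder_ge m g) ->
  ideal_pow I k f -> worder_ge (k * m) f.
Proof.
move=> hI; elim: k f => [|k IH] f; first by move=> _ e _; rewrite mul0n.
apply: worder_ge_gen => _ [a [b [ha [hb ->]]]].
by rewrite mulSnr; apply: worder_geM (IH _ ha) (hI _ hb).
Qed.

Definition has_worder d f :=
  worder_ge d f /\ exists2 e, e \in msupp f & wdeg e = d.

Lemma has_worder_exists f e0 : e0 \in msupp f ->
  exists2 d, (d <= wdeg e0)%N & has_worder d f.
Proof.
move=> e0f; have exd : exists d, has (fun e => wdeg e == d) (msupp f).
  by exists (wdeg e0); apply/hasP; exists e0.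
have [d /hasP [e1 e1f /eqP e1d] d_min] := ex_minnP exd.
have fd : worder_ge d f by move=> e ef; apply: d_min; apply/hasP; exists e.
by exists d; [apply: fd | split=> //; exists e1].
Qed.

Lemma has_worder_initial d f : has_worder d f ->
  exists h, [/\ h != 0, msupp_in (fun e => wdeg e = d) h & worder_ge d.+1 (f - h)].
Proof.
move=> [fd [e1 e1f e1d]].
pose h := \sum_(e <- msupp f | wdeg e == d) f@_e *: 'X_[e].
have fh : f - h = \sum_(e <- msupp f | (e \in msupp f) && (wdeg e != d)) f@_e *: 'X_[e].
  apply/eqP; rewrite subr_eq addrC -big_seq_cond {1}(mpolyE f).
  by rewrite (bigID (fun e => wdeg e == d)).
have f_hd : worder_ge d.+1 (f - h).
  rewrite fh; apply: msupp_in_sum => e /andP [ef ne]; apply: msupp_inZX.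
  by rewrite ltn_neqAle eq_sym ne fd.
exists h; split => //.
- apply: contraTneq e1f => h0; move: f_hd; rewrite h0 subr0 => f_d.
  by apply/negP => /f_d; rewrite e1d ltnn.
- by apply: msupp_in_sum => e /eqP; apply: msupp_inZX.
Qed.

Lemma worder_ge_expB d f h k : worder_ge d h -> worder_ge d.+1 (f - h) ->
  worder_ge (k * d).+1 (f ^+ k - h ^+ k).
Proof.
move=> hd f_hd; have fd : worder_ge d f.
  by rewrite -(subrK h f); apply: msupp_inD (worder_ge_le _ f_hd) hd.
elim: k => [|k IH]; first by rewrite !expr0 subrr; apply: msupp_in0.
have -> : f ^+ k.+1 - h ^+ k.+1 = (f ^+ k - h ^+ k) * f + h ^+ k * (f - h).
  by rewrite !exprSr; ring.
apply: msupp_inD.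
- by apply: worder_ge_le _ (worder_geM IH fd); rewrite mulSnr addSn.
- apply: worder_ge_le _ (worder_geM (worder_ge_exp (k := k) hd) f_hd).
  by rewrite mulSnr addnS.
Qed.

Lemma msupp_exp_mlead d h k : h != 0 -> msupp_in (fun e => wdeg e = d) h ->
  (mlead h *+ k)%MM \in msupp (h ^+ k) /\ wdeg (mlead h *+ k)%MM = (k * d)%N.
Proof.
move=> h0 hd; rewrite wdegMn (hd _ (mlead_supp h0)); split=> //.
by rewrite mcoeff_msupp mleadcX expf_neq0 // mleadc_eq0.
Qed.

Lemma has_worderX d f k : has_worder d f -> has_worder (k * d) (f ^+ k).
Proof.
move=> f_d; split; first exact: worder_ge_exp f_d.1.
have [h [h0 hd f_hd]] := has_worder_initial f_d.
have [Ehk WE] := msupp_exp_mlead k h0 hd.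
exists (mlead h *+ k)%MM => //.
have hd' : worder_ge d h by move=> e /hd ->.
have E_rest : (f ^+ k - h ^+ k)@_(mlead h *+ k)%MM = 0.
  apply/eqP; rewrite mcoeff_eq0; apply/negP.
  by move=> /(worder_ge_expB (k := k) hd' f_hd); rewrite WE ltnn.
move: Ehk; rewrite -(subrK (h ^+ k) (f ^+ k)) !mcoeff_msupp mcoeffD.
by rewrite E_rest add0r.
Qed.

Lemma worder_ge_integral m I f : (forall g, I g -> worder_ge m g) ->
  integral_closure I f -> worder_ge m f.
Proof.
move=> hI [M [a [M_gt0 [ha eq_f]]]] e0 e0f; rewrite leqNgt; apply/negP => lt_m.
have [d le_d f_d] := has_worder_exists e0f.
have [_ [E EfM EMd]] := has_worderX M f_d.
suff : worder_ge (M * d).+1 (f ^+ M) by move=> /(_ _ EfM); rewrite EMd ltnn.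
have -> : f ^+ M = - \sum_(1 <= i < M.+1) a i * f ^+ (M - i).
  by apply/eqP; rewrite -addr_eq0 eq_f.
apply: msupp_inN; rewrite big_seq_cond; apply: msupp_in_sum => i.
rewrite mem_index_iota andbT => i_range.
have [i_gt0 i_le] := andP i_range.
apply: worder_ge_le _ (worder_geM (worder_ge_pow hI (ha i i_range))
                                  (worder_ge_exp (k := M - i) f_d.1)).
by nia.
Qed.

End SupportConditions.

Section DecompositionsAboveOne.
Variable S : rat -> Prop.
Hypotheses (S0 : S 0) (SD : forall x y, S x -> S y -> S (x + y)).
Hypothesis S_ge0 : forall x, S x -> 0 <= x.

Definition decomp_ge1 (k : nat) (x : rat) : Prop :=
  exists s : seq rat, [/\ size s = k, forall y, y \in s -> S y /\ 1 <= y &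
    exists2 z, S z & x = z + \sum_(y <- s) y].

Lemma decomp_ge1_0 x : S x -> decomp_ge1 0 x.
Proof. by move=> Sx; exists [::]; split=> //; exists x; rewrite ?big_nil ?addr0. Qed.

Lemma decomp_ge1_1 x : S x -> 1 <= x -> decomp_ge1 1 x.
Proof.
move=> Sx x_ge1; exists [:: x]; split=> //; last by exists 0; rewrite ?big_seq1 ?add0r.
by move=> y; rewrite mem_seq1 => /eqP ->.
Qed.

Lemma decomp_ge1D k l x y :
  decomp_ge1 k x -> decomp_ge1 l y -> decomp_ge1 (k + l) (x + y).
Proof.
move=> [s [<- hs [z Sz ->]]] [t [<- ht [u Su ->]]].
exists (s ++ t); split; first by rewrite size_cat.
  by move=> v; rewrite mem_cat => /orP [/hs|/ht].
by exists (z + u); [apply: SD | rewrite big_cat /=; ring].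
Qed.

Lemma quasinormal_of_decomp_ge1 :
  (forall x p, S x -> (0 < p)%N -> p%:R <= x -> decomp_ge1 p x) -> quasinormal S.
Proof.
move=> hdec x p Sx p_gt0 le_px; have [s [size_s hs [z Sz ->]]] := hdec x p Sx p_gt0 le_px.
exists (fun i : 'I_p => nth 0 s i + (if i == 0 :> nat then z else 0)); split.
  move=> i; have [Sy y_ge1] : S (nth 0 s i) /\ 1 <= nth 0 s i.
    by apply: hs; rewrite mem_nth // size_s.
  split; first by apply: SD => //; case: ifP.
  by have := S_ge0 Sz; case: ifP => _; lra.
rewrite big_split /= (big_nth 0) size_s big_mkord addrC; congr (_ + _).
case: p p_gt0 {le_px size_s} => // p _.
by rewrite big_ord_recl /= big1 ?addr0.
Qed.

End DecompositionsAboveOne.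

Section LambdaMonoid.
Variables (n : nat) (lam : 'I_n -> nat).

Lemma Lambda_mon0 : Lambda_mon lam 0.
Proof. by exists (fun _ => 0%N); rewrite big1 // => i _; rewrite mul0r. Qed.

Lemma Lambda_monD x y : Lambda_mon lam x -> Lambda_mon lam y -> Lambda_mon lam (x + y).
Proof.
move=> [c ->] [d ->]; exists (fun i => c i + d i)%N.
by rewrite -big_split; apply: eq_bigr => i _; rewrite natrD mulrDl.
Qed.

Lemma Lambda_mon_ge0 x : Lambda_mon lam x -> 0 <= x.
Proof. by move=> [c ->]; apply: sumr_ge0 => i _; apply: divr_ge0. Qed.

Definition lam_weight (e : 'X_{1..n}) : rat := \sum_(i < n) (e i)%:R / (lam i)%:R.

Lemma Lambda_mon_lam_weight e : Lambda_mon lam (lam_weight e).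
Proof. by exists (fun i => e i). Qed.

Lemma lam_weightD e1 e2 : lam_weight (e1 + e2)%MM = lam_weight e1 + lam_weight e2.
Proof.
by rewrite /lam_weight -big_split; apply: eq_bigr => i _; rewrite mnmDE natrD mulrDl.
Qed.

Hypothesis lam_gt0 : forall i, (0 < lam i)%N.

Let M := (\prod_(i < n) lam i)%N.
Let wt i := (M %/ lam i)%N.

Lemma lam_mul_wt i : (lam i * wt i)%N = M.
Proof. by rewrite mulnC divnK // /M (bigD1 i) //= dvdn_mulr. Qed.

Lemma wdeg_lam_weight e : (wdeg wt e)%:R = lam_weight e * M%:R :> rat.
Proof.
rewrite natr_sum /lam_weight mulr_suml; apply: eq_bigr => i _.
have lam_dvd : (lam i %| M)%N by rewrite -(lam_mul_wt i) dvdn_mulr.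
rewrite natrM natr_div // ?unitfE ?pnatr_eq0 -?lt0n //.
by rewrite mulrA mulrAC.
Qed.

Lemma leq_wdeg_lam_weight k e : (k * M <= wdeg wt e)%N = (k%:R <= lam_weight e).
Proof. by rewrite -(ler_nat rat) natrM wdeg_lam_weight ler_pM2r ?ltr0n ?prodn_gt0. Qed.

Variable K : fieldType.

Lemma X_lam_in_I_lambda i : I_lambda K lam ('X_i ^+ lam i).
Proof. by apply/integral_closure_subset/ideal_gen_subset; exists i. Qed.

Lemma I_lambda_worder_ge g : I_lambda K lam g -> worder_ge wt M g.
Proof.
apply: worder_ge_integral => f; apply: worder_ge_gen => _ [i ->] e.
by rewrite mpolyXn msuppX mem_seq1 => /eqP ->; rewrite wdegMn wdegU lam_mul_wt.
Qed.

Lemma I_lambda_pow_decomp k f : ideal_pow (I_lambda K lam) k f ->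
  msupp_in (fun e => decomp_ge1 (Lambda_mon lam) k (lam_weight e)) f.
Proof.
have decomp0 e : decomp_ge1 (Lambda_mon lam) 0 (lam_weight e).
  exact/decomp_ge1_0/Lambda_mon_lam_weight.
elim: k f => [|k IH] f; first by move=> _ e _; apply: decomp0.
apply: msupp_in_gen => [e e' he|_ [a [b [ha [hb ->]]]]].
  by rewrite lam_weightD -[k.+1]addn0; apply: (decomp_ge1D (@Lambda_monD) he (decomp0 e')).
apply: msupp_in_sub (msupp_inM (IH _ ha) (I_lambda_worder_ge hb)).
move=> _ [e1 [e2 [he1 he2 ->]]]; rewrite lam_weightD -addn1.
apply: (decomp_ge1D (@Lambda_monD) he1); apply: (decomp_ge1_1 Lambda_mon0).
  exact: Lambda_mon_lam_weight.
by rewrite -[1]/(1%:R) -leq_wdeg_lam_weight mul1n.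
Qed.

Lemma mpolyX_integral_over_pow (c : 'X_{1..n}) p : p%:R <= lam_weight c ->
  integral_closure (ideal_pow (I_lambda K lam) p) 'X_[c].
Proof.
move=> le_p; apply: (@integral_of_exp _ _ M); first exact: prodn_gt0.
apply: ideal_pow_mulnr_sub.
have -> : 'X_[c] ^+ M = \prod_(i < n) ('X_i ^+ lam i) ^+ (c i * wt i) :> {mpoly K[n]}.
  rewrite mpolyXn mpolyXE_id; apply: eq_bigr => i _.
  by rewrite mulmnE -exprM -(lam_mul_wt i) mulnCA.
apply: ideal_pow_leq (ideal_pow_prod _ (fun i => ideal_pow_exp _ (X_lam_in_I_lambda i))).
by rewrite -leq_wdeg_lam_weight in le_p.
Qed.

End LambdaMonoid.

Theorem lemma4p6 (K : fieldType) (n : nat) (lam : 'I_n -> nat) :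
  (forall i, (0 < lam i)%N) ->
  normal_ideal (I_lambda K lam) ->
  quasinormal (Lambda_mon lam).
Proof.
move=> lam_gt0 normal_I; apply: quasinormal_of_decomp_ge1.
- exact: Lambda_mon0.
- exact: Lambda_monD.
- exact: Lambda_mon_ge0.
move=> _ p [c ->] p_gt0; pose e := [multinom c i | i < n].
have -> : \sum_(i < n) (c i)%:R / (lam i)%:R = lam_weight lam e.
  by apply: eq_bigr => i _; rewrite mnmE.
move=> /(mpolyX_integral_over_pow lam_gt0 K) /(normal_I p p_gt0) Xe_in_pow.
by apply: (I_lambda_pow_decomp lam_gt0 Xe_in_pow); rewrite msuppX mem_seq1.
Qed.
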